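(* Let $q\ge2$ and let $T$ be a connected, complete and deterministic transducer with input alphabet $\{0,\dots,q-1\}$, real output labels, an initial state, and a real final output at every state. For a nonnegative integer $n$, let $g(n)$ be the output sum of $T$ on input the $q$-ary expansion of $n$. Let $r$ be a nonnegative integer and suppose: (1) from every state, reading the input $0^r$ ($r$ zeros) leads to the initial state; (2) for every state $s$, the sum of the output labels along the path reading $0^r$ starting at $s$ equals the final output of $s$; (3) appending additional zeros at the end of the input sequence (i.e. after the most significant digit) does not change the output sum. Then $g$ is $q$-quasiadditive with parameter $r$, i.e. $g(q^{k+r}a+b)=g(a)+g(b)$ for all nonnegative integers $a,b,k$ with $0\le b<q^k$.
   Context: A transducer consists of a finite set of states, an initial state, the input alphabet $\{0,\dots,q-1\}$, an output alphabet which is a set of real numbers, transitions between states labelled $\varepsilon\mid\delta$ with $\varepsilon$ an input letter and $\delta$ an output letter, and a final output (a real number) for each state. It is complete and deterministic if for every state $s$ and input letter $\varepsilon$ there is exactly one transition leaving $s$ with input label $\varepsilon$. The transducer reads an input word (for an integer $n$: its $q$-ary expansion, starting from the least significant digit) along the unique path starting at the initial state with these input labels; the output sum is the sum of the output labels along this path plus the final output of the state where the path ends. Connected refers to the underlying graph of states and transitions. *)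

From HB Require Import structures.
From mathcomp Require Import all_boot all_order all_algebra.
From mathcomp Require Import reals.
Set Implicit Arguments.
Unset Strict Implicit.
Unset Printing Implicit Defensive.
Import Order.TTheory GRing.Theory Num.Theory.
Local Open Scope ring_scope.

(* Completeness and determinism
   are built in: the transition and output labels are total functions. *)
Record transducer (R : realType) (q : nat) := Transducer {
  state : finType;
  init : state;
  trans : state -> 'I_q -> state;
  out : state -> 'I_q -> R;
  final : state -> R
}.

Section Defs.
Variables (R : realType) (q : nat) (T : transducer R q).

Fixpoint end_state (s : state T) (w : seq 'I_q) : state T :=
  if w is a :: w' then end_state (trans s a) w' else s.

Fixpoint path_out (s : state T) (w : seq 'I_q) : R :=
  if w is a :: w' then out s a + path_out (trans s a) w' else 0.

Definition output_sum (w : seq 'I_q) : R :=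
  path_out (init T) w + final (end_state (init T) w).

Definition edge_rel : rel (state T) :=
  fun s t => [exists a : 'I_q, trans s a == t] || [exists a : 'I_q, trans t a == s].

Definition connected_transducer : Prop :=
  forall s t : state T, connect edge_rel s t.

End Defs.

(* q-ary expansion (least significant digit first) of n, as a list of nats;
   the expansion of 0 is the empty word. *)
Fixpoint digits_aux (q fuel n : nat) : seq nat :=
  if fuel is fuel'.+1 then
    (if n == 0%N then [::] else (n %% q)%N :: digits_aux q fuel' (n %/ q)%N)
  else [::].

Definition digits (q n : nat) : seq nat := digits_aux q n.+1 n.

(* the same expansion as a word over the input alphabet 'I_q (for q >= 2
   every digit is < q, so pmap insub drops nothing) *)
Definition qword (q n : nat) : seq 'I_q := pmap insub (digits q n).

Definition zero_word (q : nat) (w : seq 'I_q) : bool :=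
  all (fun a : 'I_q => nat_of_ord a == 0%N) w.

Definition tsum (R : realType) (q : nat) (T : transducer R q) (n : nat) : R :=
  output_sum T (qword q n).

(** The q-ary expansion of q^(k+r) a + b is that of b, padded with zeros up to
    length k, followed by r zeros and then the expansion of a.  Reading the r
    zeros resets the transducer to its initial state while outputting exactly
    the final output of the state it left, so the output sum splits into the
    output sum of b (padded with zeros, which is harmless by (3)) and that of
    a. *)

From HB Require Import structures.
From mathcomp Require Import all_boot all_order all_algebra.
From mathcomp Require Import reals.
From mathcomp Require Import zify.
Set Implicit Arguments.
Unset Strict Implicit.
Unset Printing Implicit Defensive.
Import Order.TTheory GRing.Theory Num.Theory.
Local Open Scope ring_scope.

Section Digits.
Variables (q : nat) (hq : (1 < q)%N).

Lemma digits_aux_fuel fuel fuel' n : (n < fuel)%N -> (n < fuel')%N ->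
  digits_aux q fuel n = digits_aux q fuel' n.
Proof.
elim: fuel fuel' n => [|fuel IH] [|fuel'] n //= n_lt n_lt'.
case: eqP => // /eqP n_neq0; congr (_ :: _).
have n_div_lt : (n %/ q < n)%N by rewrite ltn_Pdiv // lt0n.
by apply: IH; lia.
Qed.

Lemma digitsE n :
  digits q n = if n == 0%N then [::] else (n %% q)%N :: digits q (n %/ q).
Proof.
rewrite {1}/digits [LHS]/=; case: eqP => // /eqP n_neq0; congr (_ :: _).
have n_div_lt : (n %/ q < n)%N by rewrite ltn_Pdiv // lt0n.
by apply: digits_aux_fuel.
Qed.

Lemma digits_shiftD m a b : (0 < a)%N -> (b < q ^ m)%N ->
  digits q (q ^ m * a + b) =
  digits q b ++ nseq (m - size (digits q b)) 0%N ++ digits q a.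
Proof.
move=> a_gt0; elim: m b => [|m IH] b b_lt.
  have -> : b = 0%N by move: b_lt; rewrite expn0; lia.
  by rewrite expn0 mul1n addn0.
have q_gt0 : (0 < q)%N by lia.
have bq_lt : (b %/ q < q ^ m)%N by rewrite ltn_divLR // -expnSr.
have shiftE : (q ^ m.+1 * a + b = (q ^ m * a + b %/ q) * q + b %% q)%N.
  by rewrite [in LHS](divn_eq b q) expnS; lia.
have qma_gt0 : (0 < q ^ m * a)%N by rewrite muln_gt0 expn_gt0 q_gt0.
rewrite digitsE shiftE modnMDl divnMDl // modn_mod (divn_small (ltn_pmod b q_gt0)).
rewrite addn0 IH // ifN; last by lia.
case: (eqVneq b 0%N) => [->|b_neq0]; first by rewrite div0n mod0n subn0.
by rewrite [digits q b]digitsE (negbTE b_neq0) subSS.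
Qed.

End Digits.

Definition zeros (q j : nat) : seq 'I_q := pmap insub (nseq j 0%N).

Lemma size_zeros q j : (0 < q)%N -> size (zeros q j) = j.
Proof. by move=> q_gt0; elim: j => //= j IH; rewrite /zeros /= insubT /= IH. Qed.

Lemma zero_word_zeros q j : (0 < q)%N -> zero_word (zeros q j).
Proof. by move=> q_gt0; elim: j => //= j IH; rewrite /zeros /= insubT. Qed.

Lemma qword_shiftD q k r a b : (1 < q)%N -> (0 < a)%N -> (b < q ^ k)%N ->
  qword q (q ^ (k + r) * a + b) =
  qword q b ++ zeros q (k - size (digits q b)) ++ zeros q r ++ qword q a.
Proof.
move=> hq a_gt0 b_lt; have q_gt0 : (0 < q)%N by lia.
have qra_gt0 : (0 < q ^ r * a)%N by rewrite muln_gt0 expn_gt0 q_gt0.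
rewrite /qword expnD -mulnA digits_shiftD // -[(q ^ r * a)%N]addn0.
rewrite (digits_shiftD hq) ?expn_gt0 ?q_gt0 //=.
by rewrite subn0 !pmap_cat.
Qed.

Section Transducer.
Variables (R : realType) (q : nat) (T : transducer R q).

Lemma path_out_cat (s : state T) u v :
  path_out s (u ++ v) = path_out s u + path_out (end_state s u) v.
Proof. by elim: u s => [|x u IH] s /=; rewrite ?add0r // IH addrA. Qed.

Lemma end_state_cat (s : state T) u v :
  end_state s (u ++ v) = end_state (end_state s u) v.
Proof. by elim: u s => [|x u IH] s //=. Qed.

Variable r : nat.
Hypothesis zeros_reset : forall (s : state T) (w : seq 'I_q),
  size w = r -> zero_word w -> end_state s w = init T.
Hypothesis zeros_out : forall (s : state T) (w : seq 'I_q),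
  size w = r -> zero_word w -> path_out s w = final s.

Lemma output_sum_reset u z w : size z = r -> zero_word z ->
  output_sum T (u ++ z ++ w) = output_sum T u + output_sum T w.
Proof.
move=> z_size z_zero; rewrite /output_sum !path_out_cat !end_state_cat.
by rewrite (zeros_reset _ z_size z_zero) (zeros_out _ z_size z_zero) !addrA.
Qed.

Lemma final_init_eq0 z : size z = r -> zero_word z ->
  output_sum T z = output_sum T [::] -> final (init T) = 0.
Proof.
move=> z_size z_zero; have := output_sum_reset [::] [::] z_size z_zero.
rewrite cats0 /= => ->; rewrite /output_sum /= add0r.
by move=> /eqP; rewrite -subr_eq0 addrK => /eqP.
Qed.

End Transducer.

Theorem proposition10 (R : realType) (q : nat) (hq : (2 <= q)%N)
  (T : transducer R q) (r : nat)
  (hconn : connected_transducer T)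
  (h1 : forall (s : state T) (w : seq 'I_q),
      size w = r -> zero_word w -> end_state s w = init T)
  (h2 : forall (s : state T) (w : seq 'I_q),
      size w = r -> zero_word w -> path_out s w = final s)
  (h3 : forall (n : nat) (w : seq 'I_q),
      zero_word w -> output_sum T (qword q n ++ w) = output_sum T (qword q n)) :
  forall a b k : nat, (b < q ^ k)%N ->
    tsum T (q ^ (k + r) * a + b)%N = tsum T a + tsum T b.
Proof.
move=> a b k b_lt; have q_gt0 : (0 < q)%N by lia.
have zr_size := size_zeros r q_gt0; have zr_zero := zero_word_zeros r q_gt0.
case: (posnP a) => [->|a_gt0].
  have g0 : tsum T 0 = 0.
    rewrite /tsum /output_sum /= add0r.
    exact: (final_init_eq0 h1 h2 zr_size zr_zero (h3 0%N _ zr_zero)).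
  by rewrite muln0 add0n g0 add0r.
rewrite /tsum qword_shiftD // catA (output_sum_reset h1 h2) // h3 ?zero_word_zeros //.
by rewrite addrC.
Qed.
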